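(* Let $n\ge2$, $T_j>0$, and let $\vec w_j^*=\vec w_j^{(1,T_j)}$ be the winner-take-all prize structure, with $w^*_{j,1}=T_j$ and all other prizes $0$. Let $\vec w_j'$ be any prize structure with $w'_{j,1}\ge\dots\ge w'_{j,n}\ge0$ and $\sum_kw'_{j,k}\le T_j$. Then $x_{\vec w_j^*}$ single-crossing-dominates $x_{\vec w_j'}$.
   Context: Interim allocation function. For a prize structure $\vec w=(w_1,\dots,w_n)$, $x_{\vec w}(\phi):=\sum_{k=1}^n w_k\binom{n-1}{k-1}\phi^{k-1}(1-\phi)^{n-k}$ on $[0,1]$. In particular $x_{\vec w_j^*}(\phi)=T_j(1-\phi)^{n-1}$. Single-crossing. For functions $f,g$ on $[0,1]$, $f$ is single-crossing with respect to $g$ if there is $\phi_0\in[0,1]$ with $f\ge g$ on $[0,\phi_0)$ and $f\le g$ on $(\phi_0,1]$. Single-crossing dominance. An interim allocation function $x$ single-crossing-dominates $\tilde x$ if all of the following hold: 1. $\int_0^1x\ge\int_0^1\tilde x$; 2. $x$ is single-crossing with respect to $\tilde x$; 3. $-x'$ is single-crossing with respect to $-\tilde x'$. *)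

From Stdlib Require Import Reals.
From Coquelicot Require Import Coquelicot.
Open Scope R_scope.

(* A prize structure w = (w_1,...,w_n) is a function nat -> R; only the
   indices 1..n are used. *)

Definition interim (n : nat) (w : nat -> R) (phi : R) : R :=
  sum_n_m (fun k => w k * Binomial.C (n - 1) (k - 1)
                     * phi ^ (k - 1) * (1 - phi) ^ (n - k)) 1 n.

Definition winner_take_all (T : R) : nat -> R :=
  fun k => if Nat.eqb k 1 then T else 0.

Definition single_crossing (f g : R -> R) : Prop :=
  exists phi0, 0 <= phi0 <= 1 /\
    (forall phi, 0 <= phi < phi0 -> f phi >= g phi) /\
    (forall phi, phi0 < phi <= 1 -> f phi <= g phi).

Definition sc_dominates (x xt : R -> R) : Prop :=
  RInt x 0 1 >= RInt xt 0 1 /\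
  single_crossing x xt /\
  single_crossing (fun phi => - Derive x phi) (fun phi => - Derive xt phi).

(* With [n = m + 1], [x_w] is the Bernstein polynomial [sum_j w_{j+1} B_{m,j}] and
   [x_{w*} = T B_{m,0} = T (1 - phi)^m].  All [B_{m,j}] have the same integral, so
   [int x_w] is proportional to the total prize.  Differentiating a Bernstein polynomial
   gives one of degree [m - 1] with coefficients [m (c_{j+1} - c_j)], so [-x_{w'}'] has
   nonnegative coefficients summing to [m (w_1 - w_n) <= m T], while
   [-x_{w*}' = m T B_{m-1,0}].  Both crossings thus reduce to one fact: a Bernstein
   polynomial of degree [p] with nonnegative coefficients of sum at most [T] crosses
   [T (1 - phi)^p] once from below, because on [[0, 1)] their ratio is a polynomial
   with nonnegative coefficients in the increasing odds [phi / (1 - phi)]. *)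

From Stdlib Require Import Reals Lra Lia Classical.
From Coquelicot Require Import Coquelicot.
Open Scope R_scope.

Lemma sum_f_R0_nonneg (f : nat -> R) N :
  (forall j, (j <= N)%nat -> 0 <= f j) -> 0 <= sum_f_R0 f N.
Proof.
  intro Hf. induction N as [|N IH]; simpl; [apply Hf; lia|].
  assert (0 <= f (S N)) by (apply Hf; lia).
  assert (0 <= sum_f_R0 f N) by (apply IH; intros; apply Hf; lia). lra.
Qed.

Lemma sum_f_R0_ge_first (f : nat -> R) N :
  (forall j, (j <= N)%nat -> 0 <= f j) -> f 0%nat <= sum_f_R0 f N.
Proof.
  intro Hf. induction N as [|N IH]; simpl; [lra|].
  assert (0 <= f (S N)) by (apply Hf; lia).
  assert (f 0%nat <= sum_f_R0 f N) by (apply IH; intros; apply Hf; lia). lra.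
Qed.

Lemma sum_f_R0_first (f : nat -> R) N :
  (forall j, (0 < j)%nat -> f j = 0) -> sum_f_R0 f N = f 0%nat.
Proof.
  intro Hf. induction N as [|N IH]; [reflexivity|].
  rewrite tech5, IH, (Hf (S N)) by lia. ring.
Qed.

Lemma sum_f_R0_telescope (u : nat -> R) N :
  sum_f_R0 (fun j => u j - u (S j)) N = u 0%nat - u (S N).
Proof. induction N as [|N IH]; simpl; [|rewrite IH]; ring. Qed.

Lemma sum_coef_pow_le (c : nat -> R) N s t :
  (forall j, (j <= N)%nat -> 0 <= c j) -> 0 <= s <= t ->
  sum_f_R0 (fun j => c j * s ^ j) N <= sum_f_R0 (fun j => c j * t ^ j) N.
Proof.
  intros Hc Hst. apply sum_Rle. intros j Hj.
  apply Rmult_le_compat_l; [now apply Hc|]. apply pow_incr; lra.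
Qed.

Lemma is_RInt_sum_f_R0 (f : nat -> R -> R) N a b :
  (forall j, ex_RInt (f j) a b) ->
  is_RInt (fun x => sum_f_R0 (fun j => f j x) N) a b
    (sum_f_R0 (fun j => RInt (f j) a b) N).
Proof.
  intro Hf. induction N as [|N IH]; simpl.
  - exact (RInt_correct _ _ _ (Hf 0%nat)).
  - exact (is_RInt_plus _ _ _ _ _ _ IH (RInt_correct _ _ _ (Hf (S N)))).
Qed.

Lemma nonincreasing_ge_last (w : nat -> R) n k :
  (forall i, (1 <= i < n)%nat -> w i >= w (S i)) -> (1 <= k <= n)%nat -> w n <= w k.
Proof.
  intros Hdec Hk. remember (n - k)%nat as d eqn:Hd. revert k Hk Hd.
  induction d as [|d IH]; intros k Hk Hd.
  - replace k with n by lia. lra.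
  - assert (w k >= w (S k)) by (apply Hdec; lia).
    assert (w n <= w (S k)) by (apply IH; lia). lra.
Qed.

Lemma C_nonneg m j : 0 <= Binomial.C m j.
Proof.
  unfold Binomial.C. apply Rmult_le_pos; [apply pos_INR|].
  left. apply Rinv_0_lt_compat, Rmult_lt_0_compat; apply INR_fact_lt_0.
Qed.

Lemma C_succ_succ p j : Binomial.C (S p) (S j) = INR (S p) / INR (S j) * Binomial.C p j.
Proof.
  unfold Binomial.C. simpl (S p - S j)%nat. rewrite !fact_simpl, !mult_INR.
  field. repeat split; try apply INR_fact_neq_0; apply not_0_INR; lia.
Qed.
Definition bernstein (m j : nat) (x : R) : R :=
  Binomial.C m j * x ^ j * (1 - x) ^ (m - j).

Definition bernstein_poly (m : nat) (c : nat -> R) (x : R) : R :=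
  sum_f_R0 (fun j => c j * bernstein m j x) m.

(* The two halves of the derivative of [bernstein m j].  They are kept apart because
   Stdlib's [Binomial.C m j] is not [0] for [j > m], so the boundary terms
   [bernstein_up m 0] and [bernstein_down m m] have to vanish through [INR 0]. *)
Definition bernstein_up (m j : nat) (x : R) : R :=
  Binomial.C m j * INR j * x ^ pred j * (1 - x) ^ (m - j).

Definition bernstein_down (m j : nat) (x : R) : R :=
  Binomial.C m j * INR (m - j) * x ^ j * (1 - x) ^ pred (m - j).

Lemma bernstein_0 m x : bernstein m 0 x = (1 - x) ^ m.
Proof. unfold bernstein. rewrite C_n_0, Nat.sub_0_r. ring. Qed.

Lemma bernstein_nonneg m j x : 0 <= x <= 1 -> 0 <= bernstein m j x.
Proof.
  intro Hx. unfold bernstein.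
  apply Rmult_le_pos; [apply Rmult_le_pos|]; [apply C_nonneg| |]; apply pow_le; lra.
Qed.

Lemma is_derive_bernstein m j x :
  is_derive (bernstein m j) x (bernstein_up m j x - bernstein_down m j x).
Proof.
  unfold bernstein, bernstein_up, bernstein_down. auto_derive; [auto|].
  change (1 + - x) with (1 - x). ring.
Qed.

Lemma bernstein_up_succ p j x :
  bernstein_up (S p) (S j) x = INR (S p) * bernstein p j x.
Proof.
  unfold bernstein_up, bernstein. rewrite C_succ_succ. simpl (pred (S j)).
  simpl (S p - S j)%nat. field. apply not_0_INR; lia.
Qed.

Lemma bernstein_down_le p j x : (j <= p)%nat ->
  bernstein_down (S p) j x = INR (S p) * bernstein p j x.
Proof.
  intro Hj. unfold bernstein_down, bernstein. rewrite pascal_step2 by exact Hj.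
  replace (S p - j)%nat with (S (p - j)) by lia. simpl pred.
  field. apply not_0_INR; lia.
Qed.

Lemma sum_bernstein_derivative p c x :
  sum_f_R0 (fun j => c j * (bernstein_up (S p) j x - bernstein_down (S p) j x)) (S p) =
  bernstein_poly p (fun j => INR (S p) * (c (S j) - c j)) x.
Proof.
  rewrite (sum_eq _ (fun j => c j * bernstein_up (S p) j x - c j * bernstein_down (S p) j x))
    by (intros; ring).
  rewrite minus_sum, decomp_sum, tech5 by lia. simpl pred.
  unfold bernstein_poly.
  rewrite (sum_eq _ (fun j => c (S j) * (INR (S p) * bernstein p j x)))
    by (intros; now rewrite bernstein_up_succ).
  rewrite (sum_eq (fun j => c j * bernstein_down (S p) j x)
             (fun j => c j * (INR (S p) * bernstein p j x)))
    by (intros; now rewrite bernstein_down_le).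
  rewrite (sum_eq (fun j => INR (S p) * (c (S j) - c j) * bernstein p j x)
             (fun j => c (S j) * (INR (S p) * bernstein p j x)
                       - c j * (INR (S p) * bernstein p j x)))
    by (intros; ring).
  rewrite minus_sum. unfold bernstein_up, bernstein_down.
  rewrite Nat.sub_diag. change (INR 0) with 0. ring.
Qed.

Lemma is_derive_bernstein_poly p c x :
  is_derive (bernstein_poly (S p) c) x
    (bernstein_poly p (fun j => INR (S p) * (c (S j) - c j)) x).
Proof.
  apply (is_derive_ext (fun y => sum_n (fun j => c j * bernstein (S p) j y) (S p))).
  { intro y. apply sum_n_Reals. }
  rewrite <- sum_bernstein_derivative, <- sum_n_Reals.
  apply (is_derive_sum_n (fun j y => c j * bernstein (S p) j y)).
  intros j _. apply is_derive_scal, is_derive_bernstein.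
Qed.

Lemma continuous_bernstein m j x : continuous (bernstein m j) x.
Proof. apply (ex_derive_continuous (bernstein m j) x). eexists. apply is_derive_bernstein. Qed.

Lemma ex_RInt_bernstein m j a b : ex_RInt (bernstein m j) a b.
Proof. apply (ex_RInt_continuous (V := R_CompleteNormedModule)). intros x _. apply continuous_bernstein. Qed.

Lemma bernstein_boundary_succ p j : (j < p)%nat ->
  bernstein (S p) (S j) 0 = 0 /\ bernstein (S p) (S j) 1 = 0.
Proof.
  intro Hj. unfold bernstein. rewrite Rminus_diag, !pow_i by lia. split; ring.
Qed.

(* The derivative of [bernstein (S p) (S j)] is [S p * (bernstein p j - bernstein p (S j))]
   and the function vanishes at both ends of [0, 1]. *)
Lemma RInt_bernstein_succ p j : (j < p)%nat ->
  RInt (bernstein p (S j)) 0 1 = RInt (bernstein p j) 0 1.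
Proof.
  intro Hj.
  set (df x := INR (S p) * (bernstein p j x - bernstein p (S j) x)).
  assert (Hlin : RInt df 0 1 = INR (S p) * (RInt (bernstein p j) 0 1 - RInt (bernstein p (S j)) 0 1)).
  { apply is_RInt_unique, (is_RInt_scal (V := R_NormedModule)),
      (is_RInt_minus (V := R_NormedModule));
      apply (RInt_correct (V := R_CompleteNormedModule)), ex_RInt_bernstein. }
  assert (Hftc : RInt df 0 1 = bernstein (S p) (S j) 1 - bernstein (S p) (S j) 0).
  { apply is_RInt_unique, (is_RInt_derive (bernstein (S p) (S j))); intros x _.
    - replace (df x) with (bernstein_up (S p) (S j) x - bernstein_down (S p) (S j) x);
        [apply is_derive_bernstein|].
      unfold df. rewrite bernstein_up_succ, bernstein_down_le by lia. ring.
    - apply (ex_derive_continuous df). unfold df, bernstein. auto_derive. auto. }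
  destruct (bernstein_boundary_succ p j Hj) as [H0 H1].
  rewrite H0, H1, Rminus_0_r, Hlin in Hftc.
  assert (INR (S p) <> 0) by (apply not_0_INR; lia).
  apply Rmult_integral in Hftc as [|]; [contradiction | lra].
Qed.

Lemma RInt_bernstein p j : (j <= p)%nat ->
  RInt (bernstein p j) 0 1 = RInt (bernstein p 0) 0 1.
Proof.
  induction j as [|j IH]; intro Hj; [reflexivity|].
  rewrite RInt_bernstein_succ by lia. apply IH. lia.
Qed.

Lemma RInt_bernstein_nonneg p j : 0 <= RInt (bernstein p j) 0 1.
Proof.
  apply RInt_ge_0; [lra | apply ex_RInt_bernstein |].
  intros x Hx. apply bernstein_nonneg. lra.
Qed.

Lemma RInt_bernstein_poly p c :
  RInt (bernstein_poly p c) 0 1 = RInt (bernstein p 0) 0 1 * sum_f_R0 c p.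
Proof.
  rewrite scal_sum.
  apply is_RInt_unique.
  replace (sum_f_R0 _ p) with (sum_f_R0 (fun j => RInt (fun x => c j * bernstein p j x) 0 1) p).
  { apply (is_RInt_sum_f_R0 (fun j x => c j * bernstein p j x)). intro j.
    apply (ex_RInt_scal (V := R_NormedModule)), ex_RInt_bernstein. }
  apply sum_eq. intros j Hj.
  rewrite (RInt_scal (V := R_CompleteNormedModule)) by apply ex_RInt_bernstein.
  rewrite RInt_bernstein by exact Hj. reflexivity.
Qed.

Lemma single_crossing_ext (f g f' g' : R -> R) :
  (forall x, f x = f' x) -> (forall x, g x = g' x) ->
  single_crossing f g -> single_crossing f' g'.
Proof.
  intros Hf Hg [phi0 [H01 [Hlo Hhi]]]. exists phi0.
  split; [exact H01|split]; intros phi Hphi; rewrite <- Hf, <- Hg; auto.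
Qed.

(* The crossing point is the supremum of [{0} ∪ {x ∈ [0,1) | f x >= g x}]. *)
Lemma single_crossing_of_downward_closed (f g : R -> R) :
  (forall psi phi, 0 <= psi < phi -> phi < 1 -> f phi >= g phi -> f psi >= g psi) ->
  f 1 <= g 1 -> single_crossing f g.
Proof.
  intros Hdown H1.
  set (E x := x = 0 \/ (0 <= x < 1 /\ f x >= g x)).
  destruct (completeness E) as [l [Hub Hlub]].
  { exists 1. intros y [->|[Hy _]]; lra. }
  { exists 0. now left. }
  assert (Hl0 : 0 <= l) by (apply Hub; now left).
  assert (Hl1 : l <= 1) by (apply Hlub; intros y [->|[Hy _]]; lra).
  exists l. split; [lra|split].
  - intros phi [Hphi0 Hphil].
    destruct (classic (exists s, E s /\ phi < s)) as [[s [[->|[Hs Hfs]] Hps]]|Hno].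
    + lra.
    + apply (Hdown phi s); lra.
    + assert (l <= phi); [|lra].
      apply Hlub. intros y Hy. apply Rnot_lt_le. intro Hlt. apply Hno. now exists y.
  - intros phi [Hlphi Hphi1].
    destruct (Req_dec phi 1) as [->|Hne]; [exact H1|].
    apply Rnot_lt_le. intro Hlt.
    assert (phi <= l) by (apply Hub; right; split; lra). lra.
Qed.

Definition odds (x : R) : R := x / (1 - x).

Lemma odds_le psi phi : 0 <= psi <= phi -> phi < 1 -> 0 <= odds psi <= odds phi.
Proof.
  intros H Hphi. unfold odds, Rdiv. split.
  - apply Rmult_le_pos; [lra|]. left. apply Rinv_0_lt_compat. lra.
  - apply Rmult_le_compat; try lra; [left; apply Rinv_0_lt_compat; lra|].
    apply Rinv_le_contravar; lra.
Qed.

Lemma bernstein_poly_odds p c x : x < 1 ->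
  bernstein_poly p c x =
  (1 - x) ^ p * sum_f_R0 (fun j => c j * Binomial.C p j * odds x ^ j) p.
Proof.
  intro Hx. unfold bernstein_poly, bernstein, odds. rewrite scal_sum.
  apply sum_eq. intros j Hj.
  assert (Hsplit : (1 - x) ^ p = (1 - x) ^ j * (1 - x) ^ (p - j))
    by (rewrite <- pow_add; f_equal; lia).
  unfold Rdiv. rewrite Hsplit, Rpow_mult_distr, pow_inv.
  field. apply pow_nonzero. lra.
Qed.

Lemma bernstein_single_crossing p c T :
  (forall j, (j <= p)%nat -> 0 <= c j) -> sum_f_R0 c p <= T ->
  single_crossing (fun x => T * bernstein p 0 x) (bernstein_poly p c).
Proof.
  intros Hc HT. destruct p as [|q].
  - exists 1. split; [lra|split]; [|intros; lra].
    intros phi _. unfold bernstein_poly, bernstein. simpl in HT |- *.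
    rewrite C_n_0. lra.
  - apply single_crossing_of_downward_closed.
    + intros psi phi Hpsi Hphi Hge.
      assert (Hcoef : forall j, (j <= S q)%nat -> 0 <= c j * Binomial.C (S q) j)
        by (intros; apply Rmult_le_pos; [auto | apply C_nonneg]).
      set (P t := sum_f_R0 (fun j => c j * Binomial.C (S q) j * t ^ j) (S q)).
      assert (Hpos : forall x, x < 1 -> 0 < (1 - x) ^ S q) by (intros; apply pow_lt; lra).
      rewrite bernstein_0, bernstein_poly_odds in Hge |- * by lra. fold (P (odds phi)) in Hge.
      fold (P (odds psi)).
      assert (HPphi : P (odds phi) <= T).
      { apply (Rmult_le_reg_l ((1 - phi) ^ S q)); [auto | lra]. }
      assert (HPmono : P (odds psi) <= P (odds phi)) by (apply sum_coef_pow_le; [auto | apply odds_le; lra]).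
      assert (0 < (1 - psi) ^ S q) by (apply Hpos; lra).
      apply Rle_ge. rewrite (Rmult_comm T). apply Rmult_le_compat_l; lra.
    + rewrite bernstein_0, Rminus_diag, pow_i, Rmult_0_r by lia.
      apply sum_f_R0_nonneg. intros j Hj.
      apply Rmult_le_pos; [auto | apply bernstein_nonneg; lra].
Qed.

Lemma interim_succ m w x : interim (S m) w x = bernstein_poly m (fun j => w (S j)) x.
Proof.
  unfold interim, bernstein_poly. rewrite <- sum_n_m_S, <- sum_n_Reals.
  apply sum_n_m_ext. intro j. unfold bernstein.
  rewrite !Nat.sub_succ, !Nat.sub_0_r, !Rmult_assoc. reflexivity.
Qed.

Lemma interim_winner_take_all m T x :
  interim (S m) (winner_take_all T) x = T * bernstein m 0 x.
Proof.
  rewrite interim_succ. unfold bernstein_poly.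
  rewrite sum_f_R0_first; [reflexivity|].
  intros [|j] Hj; [lia|]. apply Rmult_0_l.
Qed.

Lemma opp_Derive_interim p w x :
  - Derive (interim (S (S p)) w) x =
  bernstein_poly p (fun j => INR (S p) * (w (S j) - w (S (S j)))) x.
Proof.
  assert (HD : Derive (interim (S (S p)) w) x =
               bernstein_poly p (fun j => INR (S p) * (w (S (S j)) - w (S j))) x).
  { apply is_derive_unique, (is_derive_ext (bernstein_poly (S p) (fun j => w (S j)))).
    - intro y. symmetry. apply interim_succ.
    - apply is_derive_bernstein_poly. }
  rewrite HD. unfold bernstein_poly.
  rewrite <- (Rmult_1_l (sum_f_R0 _ p)), Ropp_mult_distr_l, scal_sum.
  apply sum_eq. intros j _. ring.
Qed.

Lemma opp_Derive_interim_winner_take_all p T x :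
  - Derive (interim (S (S p)) (winner_take_all T)) x = INR (S p) * T * bernstein p 0 x.
Proof.
  rewrite opp_Derive_interim. unfold bernstein_poly.
  rewrite sum_f_R0_first by (intros [|j] Hj; [lia | cbv [winner_take_all Nat.eqb]; ring]).
  cbv [winner_take_all Nat.eqb]. ring.
Qed.

Lemma sum_scaled_decrements_le p (w : nat -> R) T :
  w 1%nat <= T -> 0 <= w (S (S p)) ->
  sum_f_R0 (fun j => INR (S p) * (w (S j) - w (S (S j)))) p <= INR (S p) * T.
Proof.
  intros H1 Hlast.
  rewrite (sum_eq _ (fun j => (w (S j) - w (S (S j))) * INR (S p))) by (intros; ring).
  rewrite <- scal_sum, (sum_f_R0_telescope (fun j => w (S j))).
  apply Rmult_le_compat_l; [apply pos_INR | lra].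
Qed.

Theorem mainTheorem8 (n : nat) (T : R) (w' : nat -> R) :
  (2 <= n)%nat ->
  0 < T ->
  (forall k, (1 <= k < n)%nat -> w' k >= w' (S k)) ->
  w' n >= 0 ->
  sum_n_m w' 1 n <= T ->
  sc_dominates (interim n (winner_take_all T)) (interim n w').
Proof.
  intros Hn _ Hdec Hlast Hsum.
  destruct n as [|m]; [lia|].
  assert (Hnonneg : forall j, (j <= m)%nat -> 0 <= w' (S j)).
  { intros j Hj. assert (w' (S m) <= w' (S j)) by (apply nonincreasing_ge_last; auto; lia). lra. }
  assert (Htotal : sum_f_R0 (fun j => w' (S j)) m <= T).
  { rewrite <- sum_n_Reals. unfold sum_n. rewrite sum_n_m_S. exact Hsum. }
  split; [|split].
  - rewrite !(RInt_ext _ _ _ _ (fun x _ => interim_succ m _ x)), !RInt_bernstein_poly.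
    rewrite (sum_f_R0_first (fun j => winner_take_all T (S j))) by (intros [|j] Hj; [lia | reflexivity]).
    apply Rle_ge, Rmult_le_compat_l; [apply RInt_bernstein_nonneg | exact Htotal].
  - apply (single_crossing_ext (fun x => T * bernstein m 0 x) (bernstein_poly m (fun j => w' (S j)))).
    + intro x. symmetry. apply interim_winner_take_all.
    + intro x. symmetry. apply interim_succ.
    + now apply bernstein_single_crossing.
  - destruct m as [|p]; [lia|].
    apply (single_crossing_ext (fun x => INR (S p) * T * bernstein p 0 x)
             (bernstein_poly p (fun j => INR (S p) * (w' (S j) - w' (S (S j)))))).
    + intro x. symmetry. apply opp_Derive_interim_winner_take_all.
    + intro x. symmetry. apply opp_Derive_interim.
    + apply bernstein_single_crossing.
      * intros j Hj. assert (w' (S j) >= w' (S (S j))) by (apply Hdec; lia).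
        apply Rmult_le_pos; [apply pos_INR | lra].
      * apply sum_scaled_decrements_le; [|apply Hnonneg; lia].
        exact (Rle_trans _ _ _ (sum_f_R0_ge_first _ _ Hnonneg) Htotal).
Qed.
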